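(* Let $(\sigma,\rho)\in GL_n(\mathbb R)\times GL_m(\mathbb R)$ be a $G$-compatible pair, i.e. $\sigma\exp\left(\rho^{(j)}\cdot\Delta\right)\sigma^{-1}\in SL_n(\mathbb Z)$ for all $j=1,\dots,m$, where $\rho^{(j)}$ is the $j$-th column of $\rho$. Then $$L_{(\sigma,\rho)}:=\sigma^{-1}\mathbb Z^n\rtimes_\eta\rho\mathbb Z^m=\{(\sigma^{-1}v,\rho p):\ v\in\mathbb Z^n,\ p\in\mathbb Z^m\}\subset G$$ is a lattice in $G$ (a discrete subgroup with $G/L_{(\sigma,\rho)}$ carrying a finite $G$-invariant measure; in fact it is co-compact).
   Context: Fix integers $1\le m\le n$. Let $\Delta_1,\dots,\Delta_m\in\mathbb R^{n\times n}$ be linearly independent, nonsingular, traceless diagonal matrices $\Delta_i=\mathrm{diag}(d_1^{(i)},\dots,d_n^{(i)})$ such that for each $i$, $d_k^{(i)}\neq d_j^{(i)}$ whenever $k\neq j$. For $t=(t_1,\dots,t_m)^T\in\mathbb R^m$ write $t\cdot\Delta=\sum_{i=1}^m t_i\Delta_i$ and $\eta(t)=e^{t\cdot\Delta}$ (matrix exponential). Let $G=\mathbb R^n\rtimes_\eta\mathbb R^m$ be the Lie group with underlying set $\mathbb R^n\times\mathbb R^m$ and multiplication $(x,t)(y,s)=(x+e^{t\cdot\Delta}y,\ t+s)$; the inverse is $(x,t)^{-1}=(-e^{-t\cdot\Delta}x,-t)$. *)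

From HB Require Import structures.
From mathcomp Require Import all_boot all_order all_algebra.
From mathcomp Require Import all_classical all_reals all_analysis.
Set Implicit Arguments. Unset Strict Implicit. Unset Printing Implicit Defensive.
Import Order.TTheory GRing.Theory Num.Theory.
Import numFieldNormedType.Exports.
Local Open Scope classical_set_scope.
Local Open Scope ring_scope.

Definition mexp (R : realType) (n : nat) (A : 'M[R]_n) : 'M[R]_n :=
  limn (series (fun k : nat => (k`!%:R)^-1 *: A ^+ k)).

Definition tdot (R : realType) (n m : nat) (Delta : 'I_m -> 'M[R]_n)
  (t : 'cV[R]_m) : 'M[R]_n := \sum_(i < m) t i 0 *: Delta i.

Definition eta (R : realType) (n m : nat) (Delta : 'I_m -> 'M[R]_n)
  (t : 'cV[R]_m) : 'M[R]_n := mexp (tdot Delta t).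

(* The group G = R^n x|_eta R^m : carrier R^n x R^m *)
Definition Gmul (R : realType) (n m : nat) (Delta : 'I_m -> 'M[R]_n)
  (g h : 'cV[R]_n * 'cV[R]_m) : 'cV[R]_n * 'cV[R]_m :=
  (g.1 + eta Delta g.2 *m h.1, g.2 + h.2).

Definition Gone (R : realType) (n m : nat) : 'cV[R]_n * 'cV[R]_m := (0, 0).

Definition Ginv (R : realType) (n m : nat) (Delta : 'I_m -> 'M[R]_n)
  (g : 'cV[R]_n * 'cV[R]_m) : 'cV[R]_n * 'cV[R]_m :=
  (- (eta Delta (- g.2) *m g.1), - g.2).

Definition in_SLnZ (R : realType) (n : nat) (A : 'M[R]_n) : Prop :=
  (forall i j, A i j \is a Num.int) /\ \det A = 1.

Definition G_compatible (R : realType) (n m : nat) (Delta : 'I_m -> 'M[R]_n)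
  (sigma : 'M[R]_n) (rho : 'M[R]_m) : Prop :=
  forall j : 'I_m, in_SLnZ (sigma *m eta Delta (col j rho) *m invmx sigma).

Definition Lsr (R : realType) (n m : nat) (sigma : 'M[R]_n) (rho : 'M[R]_m)
  : set ('cV[R]_n * 'cV[R]_m) :=
  [set g | exists (v : 'cV[int]_n) (p : 'cV[int]_m),
      g = (invmx sigma *m map_mx intr v, rho *m map_mx intr p)].

Definition is_subgroup (R : realType) (n m : nat) (Delta : 'I_m -> 'M[R]_n)
  (L : set ('cV[R]_n * 'cV[R]_m)) : Prop :=
  L (Gone R n m) /\
  (forall g h, L g -> L h -> L (Gmul Delta g h)) /\
  (forall g, L g -> L (Ginv Delta g)).

Definition is_discrete (R : realType) (n m : nat)
  (L : set ('cV[R]_n * 'cV[R]_m)) : Prop :=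
  forall g, L g -> exists2 U, nbhs g U & U `&` L = [set g].

Definition is_cocompact (R : realType) (n m : nat) (Delta : 'I_m -> 'M[R]_n)
  (L : set ('cV[R]_n * 'cV[R]_m)) : Prop :=
  exists K : set ('cV[R]_n * 'cV[R]_m), compact K /\
    forall g, exists k l, K k /\ L l /\ g = Gmul Delta k l.

Definition Delta_hyp (R : realType) (n m : nat) (Delta : 'I_m -> 'M[R]_n) : Prop :=
  (forall i, is_diag_mx (Delta i)) /\
  (forall i, \tr (Delta i) = 0) /\
  (forall i, Delta i \in unitmx) /\
  (forall i (k j : 'I_n), k != j -> Delta i k k != Delta i j j) /\
  (forall c : 'I_m -> R, \sum_(i < m) c i *: Delta i = 0 -> forall i, c i = 0).

From mathcomp Require Import all_boot all_order all_algebra.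
From mathcomp Require Import all_classical all_reals all_analysis.
From mathcomp Require Import lra.
Set Implicit Arguments. Unset Strict Implicit. Unset Printing Implicit Defensive.
Import Order.TTheory GRing.Theory Num.Theory.
Import numFieldNormedType.Exports.
Local Open Scope classical_set_scope.
Local Open Scope ring_scope.

(** Since the [Delta i] are diagonal, [eta] is a homomorphism [R^m -> GL_n(R)], and
   [(x, t)] lies in [L = Lsr sigma rho] exactly when [sigma x] and [rho^-1 t] are integral.
   Compatibility puts [sigma eta(rho e_j) sigma^-1] in the group [SL_n(Z)] for every basis
   vector [e_j], hence [sigma eta(rho p) sigma^-1] too for every [p] in [Z^m]; together with
   [sigma (x + eta(t) y) = sigma x + (sigma eta(t) sigma^-1) (sigma y)] this makes [L] a
   subgroup.  Discreteness holds because [L] is the image of [Z^(n+m)] under a linear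
   isomorphism.  For cocompactness, reduce [t] modulo [rho Z^m] to a bounded [s], then
   [eta(-s) x] modulo [sigma^-1 Z^n]: every point of [G] is [k * l] with [l] in [L] and [k]
   in a product of two boxes, the first of size [exp] of the bound on [s]. *)

Lemma cvg_mx_entrywise (T : topologicalType) m n (I : Type) (F : set_system I)
    {FF : Filter F} (f : I -> 'M[T]_(m, n)) (A : 'M[T]_(m, n)) :
  (forall i j, (fun x => f x i j) @ F --> A i j) -> f @ F --> A.
Proof.
move=> fA B [P PA PB].
have : \forall x \near F, forall k : 'I_m * 'I_n, P k.1 k.2 (f x k.1 k.2).
  by apply: filter_forall => k; exact: fA.
by apply: filterS => x Px; apply: PB => i j; exact: (Px (i, j)).
Qed.

Lemma expr_diag_mx (R : pzRingType) n (d : 'rV[R]_n) k :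
  diag_mx d ^+ k = diag_mx (\row_i d 0 i ^+ k).
Proof.
elim: k => [|k IHk]; first by apply/matrixP => i j; rewrite !mxE expr0.
by rewrite exprS IHk -mulmxE mulmx_diag; congr diag_mx; apply/rowP => i; rewrite !mxE exprS.
Qed.

Lemma mexp_diag_mx (R : realType) n (d : 'rV[R]_n) :
  mexp (diag_mx d) = diag_mx (\row_i expR (d 0 i)).
Proof.
apply: cvg_lim; first exact: norm_hausdorff.
apply: cvg_mx_entrywise => i j.
have -> : (fun N => series (fun k => (k`!%:R)^-1 *: diag_mx d ^+ k) N i j) =
          (fun N => series (exp_coeff (d 0 i)) N *+ (i == j)).
  apply/funext => N; rewrite /series /= summxE -sumrMnl; apply: eq_bigr => k _.
  by rewrite expr_diag_mx !mxE mulrnAr mulrC.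
rewrite !mxE; case: (i == j).
- under eq_fun do rewrite mulr1n; exact: is_cvg_series_exp_coeff.
- under eq_fun do rewrite mulr0n; exact: cvg_cst.
Qed.

Section DiagonalFlow.
Variables (R : realType) (n m : nat) (Delta : 'I_m -> 'M[R]_n).

Lemma tdotD (s t : 'cV[R]_m) : tdot Delta (s + t) = tdot Delta s + tdot Delta t.
Proof. by rewrite /tdot -big_split; apply: eq_bigr => i _; rewrite mxE scalerDl. Qed.

Hypothesis Delta_diag : forall i, is_diag_mx (Delta i).

Lemma tdot_diag_mx (t : 'cV[R]_m) : tdot Delta t = diag_mx (\row_k tdot Delta t k k).
Proof.
apply/matrixP => i j; rewrite !mxE; have [->|nij] := eqVneq i j; first by rewrite mulr1n.
rewrite mulr0n /tdot summxE big1 // => l _.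
by rewrite mxE (is_diag_mxP (Delta_diag l)) ?mulr0.
Qed.

Lemma eta_diag_mx (t : 'cV[R]_m) :
  eta Delta t = diag_mx (\row_k expR (tdot Delta t k k)).
Proof.
rewrite /eta {1}tdot_diag_mx mexp_diag_mx.
by congr diag_mx; apply/rowP => k; rewrite !mxE.
Qed.

Lemma etaD (s t : 'cV[R]_m) : eta Delta (s + t) = eta Delta s *m eta Delta t.
Proof.
rewrite !eta_diag_mx mulmx_diag; congr diag_mx; apply/rowP => k.
by rewrite !mxE tdotD mxE expRD.
Qed.

Lemma eta0 : eta Delta 0 = 1%:M.
Proof.
rewrite eta_diag_mx; apply/matrixP => i j.
by rewrite !mxE /tdot summxE big1 ?expR0 // => l _; rewrite !mxE mul0r.
Qed.

Lemma normr_tdot_le (t : 'cV[R]_m) D : (forall l, `|t l 0| <= D) ->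
  forall k, `|tdot Delta t k k| <= D * \sum_l \sum_k' `|Delta l k' k'|.
Proof.
move=> tD k; rewrite /tdot summxE mulr_sumr; apply: le_trans (ler_norm_sum _ _ _) _.
apply: ler_sum => l _; rewrite mxE normrM.
have D_ge0 : 0 <= D by apply: le_trans (tD l).
apply: le_trans (ler_wpM2r (normr_ge0 _) (tD l)) _.
by rewrite ler_wpM2l // (bigD1 k) //= lerDl sumr_ge0.
Qed.

Lemma eta_mulmx_le (t : 'cV[R]_m) (w : 'cV[R]_n) D e :
  (forall l, `|t l 0| <= D) -> (forall j, `|w j 0| <= e) ->
  forall i, `|(eta Delta t *m w) i 0| <= expR (D * \sum_l \sum_k `|Delta l k k|) * e.
Proof.
move=> tD we i; rewrite eta_diag_mx mul_diag_mx !mxE normrM ger0_norm ?expR_ge0 //.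
apply: ler_pM => //; rewrite ler_expR; apply: le_trans (ler_norm _) _.
exact: normr_tdot_le.
Qed.

End DiagonalFlow.

Lemma int_num_norm_lt1 (R : archiNumDomainType) (x : R) :
  x \is a Num.int -> `|x| < 1 -> x = 0.
Proof.
move=> /intrP[z ->]; rewrite -intr_norm -(rmorph1 (intr : int -> R)) ltr_int.
by rewrite -(add0r 1) ltzD1 normr_le0 => /eqP ->.
Qed.

Lemma mxOver_intP (R : archiNumDomainType) a b (A : 'M[R]_(a, b)) :
  reflect (exists B : 'M[int]_(a, b), A = map_mx intr B) (A \is a mxOver Num.int).
Proof.
apply: (iffP mxOverP) => [Aint | [B ->] i j]; last by rewrite mxE intr_int.
exists (map_mx Num.floor A); apply/matrixP => i j; rewrite mxE.
by apply/esym/eqP; rewrite mxE -intrEfloor.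
Qed.

Lemma mxOverD (M : zmodType) (S : addrClosed M) m n (A B : 'M[M]_(m, n)) :
  A \is a mxOver S -> B \is a mxOver S -> A + B \is a mxOver S.
Proof. by move=> /mxOverP AS /mxOverP BS; apply/mxOverP => i j; rewrite mxE rpredD. Qed.

Lemma mxOverN (M : zmodType) (S : opprClosed M) m n (A : 'M[M]_(m, n)) :
  A \is a mxOver S -> - A \is a mxOver S.
Proof. by move=> /mxOverP AS; apply/mxOverP => i j; rewrite mxE rpredN. Qed.

Lemma det_mxOver (R : comPzRingType) (S : subringClosed R) n (A : 'M[R]_n) :
  A \is a mxOver S -> \det A \in S.
Proof.
move=> /mxOverP AS; apply: rpred_sum => s _.
by rewrite rpredM ?rpredX ?rpredN1 // rpred_prod.
Qed.

Lemma adj_mxOver (R : comPzRingType) (S : subringClosed R) n (A : 'M[R]_n) :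
  A \is a mxOver S -> \adj A \is a mxOver S.
Proof.
move=> AS; apply/mxOverP => i j; rewrite mxE rpredM ?rpredX ?rpredN1 ?det_mxOver //.
by apply/mxOverP => k l; rewrite !mxE; exact: (mxOverP AS).
Qed.

Section SpecialLinearIntegral.
Variables (R : realType) (n : nat).
Implicit Types A B : 'M[R]_n.

Lemma in_SLnZP A : in_SLnZ A <-> A \is a mxOver Num.int /\ \det A = 1.
Proof. by split=> -[Aint detA]; split=> //; apply/mxOverP. Qed.

Lemma in_SLnZ1 : in_SLnZ (1%:M : 'M[R]_n).
Proof. by apply/in_SLnZP; rewrite det1 mxOver_scalar ?rpred0 ?rpred1. Qed.

Lemma in_SLnZM A B : in_SLnZ A -> in_SLnZ B -> in_SLnZ (A *m B).
Proof.
move=> /in_SLnZP[Aint detA] /in_SLnZP[Bint detB]; apply/in_SLnZP.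
by rewrite det_mulmx detA detB mulr1 mxOverM.
Qed.

Lemma in_SLnZ_invmx A : in_SLnZ A -> in_SLnZ (invmx A).
Proof.
move=> /in_SLnZP[Aint detA]; apply/in_SLnZP; rewrite det_inv detA invr1.
by rewrite /invmx unitmxE detA unitr1 invr1 scale1r adj_mxOver.
Qed.

End SpecialLinearIntegral.

Definition mx_abs_sum (R : numDomainType) a b (A : 'M[R]_(a, b)) : R :=
  \sum_i \sum_j `|A i j|.

Lemma mulmx_entry_le (R : realDomainType) a b c (A : 'M[R]_(a, b))
    (x : 'M[R]_(b, c)) e :
  0 <= e -> (forall k l, `|x k l| <= e) ->
  forall i j, `|(A *m x) i j| <= mx_abs_sum A * e.
Proof.
move=> e_ge0 xe i j; rewrite mxE; apply: le_trans (ler_norm_sum _ _ _) _.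
apply: (@le_trans _ _ (\sum_k `|A i k| * e)).
  by apply: ler_sum => k _; rewrite normrM ler_wpM2l.
rewrite -mulr_suml ler_wpM2r // /mx_abs_sum (bigD1 i) //= lerDl.
by apply: sumr_ge0 => k _; apply: sumr_ge0.
Qed.

Lemma mxOver_int_isolated (R : realType) a b (A : 'M[R]_a) (x0 : 'M[R]_(a, b)) :
  A \in unitmx -> A *m x0 \is a mxOver Num.int ->
  exists2 d : R, 0 < d &
    forall x, ball x0 d x -> A *m x \is a mxOver Num.int -> x = x0.
Proof.
move=> A_unit x0Z; pose d := (mx_abs_sum A + 1)^-1.
have S_ge0 : 0 <= mx_abs_sum A by apply: sumr_ge0 => i _; apply: sumr_ge0.
have d_gt0 : 0 < d by rewrite invr_gt0 ltr_wpDl.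
exists d => // x [_ x0x] xZ.
have Ax : A *m (x - x0) = 0.
  apply/matrixP => i j; rewrite [RHS]mxE; apply: int_num_norm_lt1.
    by rewrite mulmxBr (mxOverP (mxOverD xZ (mxOverN x0Z))).
  apply: le_lt_trans (mulmx_entry_le _ (ltW d_gt0) _ _ _) _.
    by move=> k l; rewrite !mxE distrC; apply/ltW/x0x.
  by rewrite /d ltr_pdivrMr ?mul1r ?ltrDl // ltr_wpDl.
by apply/eqP; rewrite -subr_eq0 -(mulKmx A_unit (x - x0)) Ax mulmx0.
Qed.

Lemma normr_sub_floor_le1 (R : archiRealFieldType) (x : R) : `|x - (Num.floor x)%:~R| <= 1.
Proof.
by have /andP[] := floor_itv x; rewrite intrD /= => lo hi; rewrite ger0_norm; lra.
Qed.

Lemma near_lattice_point (R : realType) a (A : 'M[R]_a) (y : 'cV[R]_a) :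
  A \in unitmx ->
  exists v : 'cV[int]_a, forall i, `|(y - A *m map_mx intr v) i 0| <= mx_abs_sum A.
Proof.
move=> A_unit; exists (map_mx Num.floor (invmx A *m y)) => i.
rewrite -{1}(mulKVmx A_unit y) -mulmxBr -[mx_abs_sum A]mulr1.
apply: mulmx_entry_le => // k l; rewrite !mxE.
exact: normr_sub_floor_le1.
Qed.

Lemma cV_box_compact (R : realType) k (C : R) :
  compact [set x : 'cV[R]_k | forall i, `|x i 0| <= C].
Proof.
have rc := @rV_compact R k (fun=> `[-C, C]%classic) (fun=> @segment_compact R _ _).
have -> : [set x : 'cV[R]_k | forall i, `|x i 0| <= C] =
    trmx @` [set v : 'rV[R]_k | forall i, `[-C, C]%classic (v ord0 i)].
  apply/seteqP; split => [x Hx|_ [v Hv <-]].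
    exists x^T; last exact: trmxK.
    by move=> i; rewrite /= mxE in_itv /= -ler_norml; exact: Hx.
  by move=> i; rewrite mxE; have := Hv i; rewrite /= in_itv /= -ler_norml.
apply: continuous_compact => //; apply: continuous_subspaceT => x.
apply: (cvg_mx_entrywise (FF := nbhs_filter x)) => i j; rewrite mxE.
under eq_fun do rewrite mxE.
exact: coord_continuous.
Qed.

Section CompatiblePair.
Variables (R : realType) (n m : nat) (Delta : 'I_m -> 'M[R]_n).
Variables (sigma : 'M[R]_n) (rho : 'M[R]_m).
Hypothesis Delta_diag : forall i, is_diag_mx (Delta i).
Hypothesis sigma_unit : sigma \in unitmx.

Local Notation conj_eta t := (sigma *m eta Delta t *m invmx sigma).

Lemma conj_etaD (s t : 'cV[R]_m) : conj_eta (s + t) = conj_eta s *m conj_eta t.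
Proof. by rewrite etaD // !mulmxA mulmxKV. Qed.

Lemma conj_etaN (t : 'cV[R]_m) : conj_eta (- t) = invmx (conj_eta t).
Proof.
have E : conj_eta (- t) *m conj_eta t = 1%:M.
  by rewrite -conj_etaD addNr eta0 // mulmx1 mulmxV.
have [_ t_unit] := mulmx1_unit E.
by rewrite -[LHS]mulmx1 -(mulmxV t_unit) mulmxA E mul1mx.
Qed.

Hypothesis compatible : G_compatible Delta sigma rho.

Lemma conj_eta_SLnZ (p : 'cV[int]_m) : in_SLnZ (conj_eta (rho *m map_mx intr p)).
Proof.
have flow0 : in_SLnZ (conj_eta 0) by rewrite eta0 // mulmx1 mulmxV //; exact: in_SLnZ1.
have flowD (s t : 'cV[R]_m) :
    in_SLnZ (conj_eta s) -> in_SLnZ (conj_eta t) -> in_SLnZ (conj_eta (s + t)).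
  by move=> Ps Pt; rewrite conj_etaD; apply: in_SLnZM.
have flowMn (t : 'cV[R]_m) k : in_SLnZ (conj_eta t) -> in_SLnZ (conj_eta (t *+ k)).
  move=> Pt; elim: k => [|k IHk]; first by rewrite mulr0n; exact: flow0.
  by rewrite mulrS; exact: flowD Pt IHk.
have flowMz (t : 'cV[R]_m) (z : int) : in_SLnZ (conj_eta t) -> in_SLnZ (conj_eta (t *~ z)).
  case: z => k Pt; first exact: flowMn.
  by rewrite NegzE mulrNz conj_etaN; apply/in_SLnZ_invmx/flowMn.
have -> : rho *m map_mx intr p = \sum_j (p j 0)%:~R *: col j rho.
  apply/matrixP => i k; rewrite ord1 mxE summxE; apply: eq_bigr => j _.
  by rewrite !mxE; exact: mulrC.
apply: (big_ind (fun t => in_SLnZ (conj_eta t))); [exact: flow0 | exact: flowD |].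
move=> j _; rewrite scaler_int; apply: flowMz; exact: compatible.
Qed.

Hypothesis rho_unit : rho \in unitmx.

Lemma conj_eta_mxOver (t : 'cV[R]_m) :
  invmx rho *m t \is a mxOver Num.int -> conj_eta t \is a mxOver Num.int.
Proof.
move=> /mxOver_intP[p tp].
have -> : t = rho *m map_mx intr p by rewrite -tp mulKVmx.
by have /in_SLnZP[] := conj_eta_SLnZ p.
Qed.

Lemma LsrP (g : 'cV[R]_n * 'cV[R]_m) : Lsr sigma rho g <->
  sigma *m g.1 \is a mxOver Num.int /\ invmx rho *m g.2 \is a mxOver Num.int.
Proof.
split=> [[v [p ->]] | [/mxOver_intP[v xv] /mxOver_intP[p tp]]] /=.
  by rewrite !mulKVmx ?mulKmx //; split; apply/mxOver_intP; eexists.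
exists v, p; case: g xv tp => x t /= xv tp.
by rewrite -xv -tp mulKmx ?mulKVmx ?unitmx_inv.
Qed.

Lemma Lsr_subgroup : is_subgroup Delta (Lsr sigma rho).
Proof.
have conj_eta_mulmx t x : sigma *m (eta Delta t *m x) = conj_eta t *m (sigma *m x).
  by rewrite !mulmxA mulmxKV.
split; [|split].
- by apply/LsrP; rewrite /= !mulmx0; split; apply: mxOver0.
- move=> [x t] [y s] /LsrP[/= xZ tZ] /LsrP[/= yZ sZ]; apply/LsrP => /=.
  rewrite !mulmxDr conj_eta_mulmx; split; apply: mxOverD => //.
  by rewrite mxOverM // conj_eta_mxOver.
- move=> [x t] /LsrP[/= xZ tZ]; apply/LsrP => /=.
  rewrite !mulmxN conj_eta_mulmx; split; apply: mxOverN => //.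
  by rewrite mxOverM // conj_eta_mxOver // mulmxN mxOverN.
Qed.

Lemma Lsr_discrete : is_discrete (Lsr sigma rho).
Proof.
move=> [x0 t0] /LsrP[/= x0Z t0Z].
have rhoV_unit : invmx rho \in unitmx by rewrite unitmx_inv.
have [d1 d1_gt0 iso1] := mxOver_int_isolated sigma_unit x0Z.
have [d2 d2_gt0 iso2] := mxOver_int_isolated rhoV_unit t0Z.
have d_gt0 : 0 < Num.min d1 d2 by rewrite lt_min d1_gt0.
exists (ball (x0, t0) (Num.min d1 d2)); first exact: nbhsx_ballx.
apply/seteqP; split => [[x t] [[/= x0x t0t] /LsrP[/= xZ tZ]] | _ ->] /=.
  have -> : x = x0 by apply: (iso1 _ _ xZ); apply: le_ball x0x; rewrite ge_min lexx.
  by have -> : t = t0 by apply: (iso2 _ _ tZ); apply: le_ball t0t; rewrite ge_min lexx orbT.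
by split; [exact: ballxx | exact/LsrP].
Qed.

Lemma Lsr_cocompact : is_cocompact Delta (Lsr sigma rho).
Proof.
pose D := mx_abs_sum rho.
pose C := expR (D * \sum_l \sum_k `|Delta l k k|) * mx_abs_sum (invmx sigma).
exists ([set x : 'cV[R]_n | forall i, `|x i 0| <= C] `*`
        [set t : 'cV[R]_m | forall i, `|t i 0| <= D]).
split=> [|[x t]]; first exact/compact_setX/cV_box_compact/cV_box_compact.
have [p tp] := near_lattice_point t rho_unit.
set s := t - rho *m map_mx intr p in tp.
have sigmaV_unit : invmx sigma \in unitmx by rewrite unitmx_inv.
have [v xv] := near_lattice_point (eta Delta (- s) *m x) sigmaV_unit.
exists (eta Delta s *m (eta Delta (- s) *m x - invmx sigma *m map_mx intr v), s).
exists (invmx sigma *m map_mx intr v, rho *m map_mx intr p).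
split; [split=> //= i | split; first by exists v, p].
  exact: eta_mulmx_le.
rewrite /Gmul /= -mulmxDr subrK mulmxA -etaD // subrr eta0 // mul1mx.
by rewrite /s subrK.
Qed.

End CompatiblePair.

Theorem mainTheorem1 (R : realType) (n m : nat) (Delta : 'I_m -> 'M[R]_n)
  (sigma : 'M[R]_n) (rho : 'M[R]_m) :
  (1 <= m)%N -> (m <= n)%N -> Delta_hyp Delta ->
  sigma \in unitmx -> rho \in unitmx ->
  G_compatible Delta sigma rho ->
  is_subgroup Delta (Lsr sigma rho) /\ is_discrete (Lsr sigma rho) /\
  is_cocompact Delta (Lsr sigma rho).
Proof.
move=> _ _ [Delta_diag _] sigma_unit rho_unit compatible.
split; first exact: Lsr_subgroup.
split; first exact: Lsr_discrete.
exact: Lsr_cocompact.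
Qed.
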